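(* For each $1\le n<\omega$, the relation $F_n$ is a $\mathbf{\Pi}^0_{2+n}$ subset of $X_n\times X_n$.
   Context: Let $\mathbb N=\{0,1,2,\dots\}$ and identify $2^{\mathbb N}$ with $\mathcal P(\mathbb N)$. For $1\le m<\omega$ and $x\in((2^{\mathbb N})^{\mathbb N})^m$ define recursively: $A^x_1=\{x(0)(k):k\in\mathbb N\}\subseteq 2^{\mathbb N}$; for $1\le j<m$ and $l\in\mathbb N$, $a^{x,l}_1=\{x(0)(k):x(1)(l)(k)=1\}$ and $a^{x,l}_{j}=\{a^{x,k}_{j-1}:x(j)(l)(k)=1\}$ for $j\ge 2$; and $A^x_{j+1}=\{a^{x,k}_j:k\in\mathbb N\}$ for $1\le j<m$. Let $X_1=(2^{\mathbb N})^{\mathbb N}$, and for $2\le n<\omega$ let $X_n$ be the set of $x\in((2^{\mathbb N})^{\mathbb N})^n$ such that for every $1\le i<n$: (1) for every $m$ there is $k$ with $x(i)(k)(m)=1$; (2) for every $k$ there is $m$ with $x(i)(k)(m)=1$; (3) for all $k,l_1,l_2$, if $x(i-1)(l_1)=x(i-1)(l_2)$ then $x(i)(k)(l_1)=x(i)(k)(l_2)$. $X_n$ has the subspace topology of the product topology. $F_n$ on $X_n$ is $x\mathrel{F_n}y\iff A^x_n=A^y_n$. *)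

From mathcomp Require Import all_boot.
Unset Printing Implicit Defensive.

(** 2^N (identified with P(N)): bit sequences; (2^N)^N; points of ((2^N)^N)^n
    are maps 'I_n -> (2^N)^N.  x(i)(k)(m) is [co x i k m]. *)
Definition Cantor := nat -> bool.
Definition Elt := nat -> Cantor.
Definition Pt (n : nat) := 'I_n -> Elt.

(** coordinate i of x (meaningful for i < n; junk value otherwise) *)
Definition co {n : nat} (x : Pt n) (i : nat) : Elt :=
  match @insub nat (fun j => j < n) 'I_n i with
  | Some j => x j
  | None => fun _ _ => false
  end.

Fixpoint Lev (j : nat) : Type :=
  match j with 0 => Cantor | S j' => Lev j' -> Prop end.

Fixpoint a {n : nat} (x : Pt n) (j : nat) (l : nat) : Lev j :=
  match j return Lev j with
  | 0 => co x 0 l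
  | S j' => fun s : Lev j' => exists k, co x (S j') l k = true /\ s = a x j' k
  end.

(** A^x_{j+1} = {a^{x,k}_j : k in N}  (with a^{x,k}_0 = x(0)(k), so
    A^x_1 = {x(0)(k) : k}). *)
Definition Aset {n : nat} (x : Pt n) (j : nat) : Lev (S j) :=
  fun s : Lev j => exists k, s = a x j k.

Definition inX {n : nat} (x : Pt n) : Prop :=
  forall i, 1 <= i < n ->
    (forall m, exists k, co x i k m = true) /\
    (forall k, exists m, co x i k m = true) /\
    (forall k l1 l2, co x (i.-1) l1 = co x (i.-1) l2 -> co x i k l1 = co x i k l2).

Definition XX (n : nat) := {p : Pt n * Pt n | inX p.1 /\ inX p.2}.

Definition agree {n : nat} (N : nat) (x y : Pt n) : Prop :=
  forall i : 'I_n, forall k m, k < N -> m < N -> x i k m = y i k m.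

(** Open subsets of X_n x X_n for the subspace topology of the product
    topology (basic neighbourhoods: agreement on finitely many coordinates). *)
Definition openXX (n : nat) (U : XX n -> Prop) : Prop :=
  forall p : XX n, U p -> exists N, forall q : XX n,
    agree N ((proj1_sig p).1) ((proj1_sig q).1) ->
    agree N ((proj1_sig p).2) ((proj1_sig q).2) -> U q.

(** Finite levels of the (boldface) Borel hierarchy on a space with open sets
    [op]: Sigma^0_1 = open; for k >= 2, Sigma^0_k = countable unions of sets
    each in Pi^0_m for some 1 <= m < k; Pi^0_k = complements of Sigma^0_k. *)
Inductive Sigma0 {T : Type} (op : (T -> Prop) -> Prop) : nat -> (T -> Prop) -> Prop :=
| Sigma0_open (U : T -> Prop) : op U -> Sigma0 op 1 U
| Sigma0_union (k : nat) (F : nat -> T -> Prop) (S : T -> Prop) :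
    (forall i, exists m, 1 <= m < k /\ Sigma0 op m (fun t => ~ F i t)) ->
    (forall t, S t <-> exists i, F i t) ->
    Sigma0 op k S.

Definition Pi0 {T : Type} (op : (T -> Prop) -> Prop) (k : nat) (S : T -> Prop) : Prop :=
  Sigma0 op k (fun t => ~ S t).

(** The relation F_n on X_n: x F_n y iff A^x_n = A^y_n. *)
Definition Frel (n : nat) (p : XX n) : Prop :=
  Aset ((proj1_sig p).1) n.-1 = Aset ((proj1_sig p).2) n.-1.

From Stdlib Require Import Bool FunctionalExtensionality PropExtensionality.
From Stdlib Require Import Classical IndefiniteDescription.
From Stdlib Require Cantor.
From mathcomp Require Import all_boot zify.

Set Implicit Arguments.
Unset Strict Implicit.

(** A^x_n = A^y_n holds iff, at every level j < n, each a^{x,k}_j equals some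
    a^{y,k'}_j and conversely: condition (1) of X_n propagates the equality
    A^x_{j+1} = A^y_{j+1} down to A^x_j = A^y_j.  Granted this back-and-forth
    property below level j, the equality a^{x,k}_j = a^{y,k'}_j is expressed
    by a formula [same_code] quantifying over indices only: at level 0 it
    compares x(0)(k) with y(0)(k') coordinatewise, and at level j+1 it asks
    x(j+1)(k)(m) = y(j+1)(k')(m') whenever m and m' have the same code at
    level j, which is correct because condition (3) makes membership in
    a^{x,k}_{j+1} depend only on the set a^{x,m}_j.  Each such formula is
    Pi^0_{j+1}, so the back-and-forth property at level j is Pi^0_{j+3}, and
    F_n is the intersection of these properties over j < n. *)

Section BorelHierarchy.
Variables (T : Type) (op : (T -> Prop) -> Prop).
Hypothesis op_bigcup : forall (I : Type) (U : I -> T -> Prop),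
  (forall i, op (U i)) -> op (fun t => exists i, U i t).

Local Notation Sigma := (Sigma0 op).
Local Notation Pi := (Pi0 op).

Lemma Sigma0_ext k (S S' : T -> Prop) :
  (forall t, S t <-> S' t) -> Sigma k S -> Sigma k S'.
Proof.
move=> eSS'; suff -> : S = S' by [].
by apply: functional_extensionality => t; apply: propositional_extensionality.
Qed.

Lemma Pi0_ext k (S S' : T -> Prop) :
  (forall t, S t <-> S' t) -> Pi k S -> Pi k S'.
Proof. by move=> eSS'; apply: Sigma0_ext => t; have := eSS' t; tauto. Qed.

Lemma Sigma0_1_open S : Sigma 1 S -> op S.
Proof.
move e1 : 1 => k hS; case: hS e1 => [U oU _ //|{}k F {}S hF _ ek].
by have [m] := hF 0; lia.
Qed.

Lemma Sigma0_inv k S : 2 <= k -> Sigma k S ->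
  exists F : nat -> T -> Prop,
    (forall i, exists m, 1 <= m < k /\ Sigma m (fun t => ~ F i t)) /\
    (forall t, S t <-> exists i, F i t).
Proof.
move=> hk hS; case: hS hk => [U _|k' F S' hF hS] hk; first by [].
by exists F.
Qed.

Lemma Sigma0_bigcup k (P : nat -> T -> Prop) :
  1 <= k -> (forall i, Sigma k (P i)) -> Sigma k (fun t => exists i, P i t).
Proof.
case: k => [//|[|k]] _ hP.
  by apply: Sigma0_open; apply: op_bigcup => i; apply: Sigma0_1_open.
have /functional_choice [F hF] := fun i => Sigma0_inv (isT : 2 <= k.+2) (hP i).
pose G ij := F (Cantor.of_nat ij).1 (Cantor.of_nat ij).2.
apply: (Sigma0_union _ _ G) => [ij|t]; first exact: (proj1 (hF _)).
split=> [[i /(proj2 (hF i)) [j hj]]|[ij hij]].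
  by exists (Cantor.to_nat (i, j)); rewrite /G Cantor.cancel_of_to.
by exists (Cantor.of_nat ij).1; apply/(proj2 (hF _)); exists (Cantor.of_nat ij).2.
Qed.

Lemma Pi0_bigcap k (P : nat -> T -> Prop) :
  1 <= k -> (forall i, Pi k (P i)) -> Pi k (fun t => forall i, P i t).
Proof.
move=> hk hP; apply: (@Sigma0_ext _ (fun t => exists i, ~ P i t)).
  by move=> t; split=> [[i hi] h|/not_all_ex_not //]; apply: hi.
exact: Sigma0_bigcup.
Qed.

Lemma Pi0_and k (A B : T -> Prop) :
  1 <= k -> Pi k A -> Pi k B -> Pi k (fun t => A t /\ B t).
Proof.
move=> hk hA hB; apply: (@Pi0_ext _ (fun t => forall i, (if i is 0 then A else B) t)).
  by move=> t; split=> [h|[hAt hBt] [|i]] //; split; [apply: (h 0)|apply: (h 1)].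
by apply: Pi0_bigcap => // -[|i].
Qed.

Lemma Sigma0_succ_of_Pi0 k S : 1 <= k -> Pi k S -> Sigma k.+1 S.
Proof.
move=> hk hS; apply: (Sigma0_union _ _ (fun _ => S)) => [i|t].
  by exists k; split => //; lia.
by split=> [|[]]; first exists 0.
Qed.

Lemma Pi0_succ_of_Sigma0 k S : 1 <= k -> Sigma k S -> Pi k.+1 S.
Proof.
move=> hk hS; apply: Sigma0_succ_of_Pi0 => //.
by apply: Sigma0_ext hS => t; tauto.
Qed.

Lemma Pi0_forall_exists k (P : nat -> nat -> T -> Prop) :
  1 <= k -> (forall i j, Pi k (P i j)) ->
  Pi k.+2 (fun t => forall i, exists j, P i j t).
Proof.
move=> hk hP; apply: Pi0_bigcap => // i; apply: Pi0_succ_of_Sigma0 => //.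
by apply: Sigma0_bigcup => // j; apply: Sigma0_succ_of_Pi0.
Qed.

Lemma Pi0_imply k (A B : T -> Prop) :
  1 <= k -> Pi k A -> Sigma k B -> Pi k.+1 (fun t => A t -> B t).
Proof.
move=> hk hA hB; apply: (@Sigma0_ext _ (fun t => A t /\ ~ B t)); first by move=> t; tauto.
apply: Sigma0_succ_of_Pi0 => //; apply: Pi0_and => //.
by apply: Sigma0_ext hB => t; tauto.
Qed.

Lemma Sigma0_mono k k' S : 2 <= k <= k' -> Sigma k S -> Sigma k' S.
Proof.
move=> /andP[hk hkk'] /(Sigma0_inv hk) [F [hF hS]].
apply: (Sigma0_union _ _ F) => // i.
by have [m [hm hFm]] := hF i; exists m; split => //; lia.
Qed.

Lemma Pi0_mono k k' S : 2 <= k <= k' -> Pi k S -> Pi k' S.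
Proof. exact: Sigma0_mono. Qed.

Definition clopen (S : T -> Prop) := op S /\ op (fun t => ~ S t).

Lemma clopenC S : clopen S -> clopen (fun t => ~ S t).
Proof.
move=> [oS oNS]; split => //; suff -> : (fun t => ~ ~ S t) = S by [].
by apply: functional_extensionality => t; apply: propositional_extensionality; tauto.
Qed.

Lemma clopen_Sigma0 k S : 1 <= k -> clopen S -> Sigma k S.
Proof.
case: k => [//|[|k]] _ [oS oNS]; first exact: Sigma0_open.
apply: (Sigma0_union _ _ (fun _ => S)) => [i|t].
  by exists 1; split; [lia | apply: Sigma0_open].
by split=> [|[]]; first exists 0.
Qed.

Lemma clopen_Pi0 k S : 1 <= k -> clopen S -> Pi k S.
Proof. by move=> hk /clopenC; apply: clopen_Sigma0. Qed.

End BorelHierarchy.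

Fixpoint same_code {n : nat} (x y : Pt n) (j k k' : nat) : Prop :=
  match j with
  | 0 => forall m, co x 0 k m = co y 0 k' m
  | j.+1 => forall m m', same_code x y j m m' -> co x j.+1 k m = co y j.+1 k' m'
  end.

Definition codes_match {n : nat} (x y : Pt n) (j : nat) : Prop :=
  (forall k, exists k', same_code x y j k k') /\
  (forall k', exists k, same_code x y j k k').

Section Codes.
Variable n : nat.

Lemma mem_a_succ (x : Pt n) i l m : inX x -> i.+1 < n ->
  (forall k k', a x i k = a x i k' -> co x i k = co x i k') ->
  (co x i.+1 l m = true <-> a x i.+1 l (a x i m)).
Proof.
move=> hx hi co_a; split=> [xlm|[k [xlk /co_a eq_mk]]]; first by exists m.
have [_ [_ co_resp]] := hx i.+1 (ltac:(lia)).
by rewrite (co_resp l m k eq_mk).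
Qed.

Lemma co_eq_of_a_eq (x : Pt n) i k k' : inX x -> i < n ->
  a x i k = a x i k' -> co x i k = co x i k'.
Proof.
move=> hx; elim: i k k' => [//|i IH] k k' hi eq_kk'.
apply: functional_extensionality => m; apply/eq_iff_eq_true.
have co_a := fun k k' => IH k k' (ltnW hi).
by rewrite !(mem_a_succ _ _ hx hi co_a) eq_kk'.
Qed.

Variables (x y : Pt n).
Hypotheses (hx : inX x) (hy : inX y).

Lemma same_codeP j k k' : j < n -> (forall i, i < j -> codes_match x y i) ->
  same_code x y j k k' <-> a x j k = a y j k'.
Proof.
elim: j k k' => [|j IH] k k' hj match_lt.
  by split=> [e|/= -> //]; apply: functional_extensionality.
have {}IH m m' := IH m m' (ltnW hj) (fun i hi => match_lt i (ltnW hi)).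
have [xy yx] := match_lt j (ltnSn j).
split=> [same|eq_kk' m m' /IH eq_mm'].
- apply: functional_extensionality => s; apply: propositional_extensionality.
  split=> [[m [xkm ->]]|[m' [ykm ->]]].
  + by have [m' sm] := xy m; exists m'; split; [rewrite -(same _ _ sm) | apply/IH].
  + by have [m sm] := yx m'; exists m; split; [rewrite (same _ _ sm) | apply/esym/IH].
- apply/eq_iff_eq_true.
  rewrite (mem_a_succ _ _ hx hj (fun k k' => co_eq_of_a_eq hx (ltnW hj))).
  by rewrite (mem_a_succ _ _ hy hj (fun k k' => co_eq_of_a_eq hy (ltnW hj))) eq_kk' eq_mm'.
Qed.

Lemma codes_matchP j : j < n -> (forall i, i < j -> codes_match x y i) ->
  codes_match x y j <-> Aset x j = Aset y j.
Proof.
move=> hj match_lt; have same k k' := same_codeP k k' hj match_lt.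
split=> [[xy yx]|eqA].
- apply: functional_extensionality => s; apply: propositional_extensionality.
  split=> [[k ->]|[k' ->]].
  + by have [k' /same->] := xy k; exists k'.
  + by have [k /same<-] := yx k'; exists k.
- split=> [k|k'].
  + have : Aset y j (a x j k) by rewrite -eqA; exists k.
    by move=> [k' e]; exists k'; apply/same.
  + have : Aset x j (a y j k') by rewrite eqA; exists k'.
    by move=> [k e]; exists k; apply/same.
Qed.

Lemma Aset_eq_pred j : j.+1 < n -> Aset x j.+1 = Aset y j.+1 -> Aset x j = Aset y j.
Proof.
move=> hj eqA.
have down (u v : Pt n) : inX u -> Aset u j.+1 = Aset v j.+1 ->
    forall s, Aset u j s -> Aset v j s.
  move=> hu eqA' s [m ->]; have [cover _] := hu j.+1 (ltac:(lia)).
  have [k ukm] := cover m.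
  have : Aset v j.+1 (a u j.+1 k) by rewrite -eqA'; exists k.
  have umk : a u j.+1 k (a u j m) by exists m.
  by move=> [k' e]; move: umk; rewrite e => -[m' [_ ->]]; exists m'.
apply: functional_extensionality => s; apply: propositional_extensionality.
by split; apply: down.
Qed.

Lemma Aset_eq_down i j : j <= i < n -> Aset x i = Aset y i -> Aset x j = Aset y j.
Proof.
elim: i => [|i IH] /andP[hji hi] eqA; first by move: hji; rewrite leqn0 => /eqP->.
move: hji; rewrite leq_eqVlt => /orP[/eqP-> //|hji].
by apply: IH; [lia | exact: Aset_eq_pred].
Qed.

Lemma codes_match_iff_Aset_eq : 1 <= n ->
  (forall j, j < n -> codes_match x y j) <-> Aset x n.-1 = Aset y n.-1.
Proof.
move=> hn; split=> [match_lt|eqA].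
  have hn' : n.-1 < n by lia.
  apply/(codes_matchP hn' (fun i hi => match_lt i (ltn_trans hi hn'))).
  exact: match_lt.
suff match_lt J : J <= n -> forall j, j < J -> codes_match x y j by exact: match_lt.
elim: J => [//|J IH] hJ j; rewrite ltnS leq_eqVlt => /orP[/eqP->|hj].
  2: exact: IH (ltnW hJ) j hj.
apply/(codes_matchP (hJ : J < n) (IH (ltnW hJ))).
by apply: (Aset_eq_down (i := n.-1)); first lia.
Qed.

End Codes.

Section ProductTopology.
Variable n : nat.

Lemma openXX_bigcup (I : Type) (U : I -> XX n -> Prop) :
  (forall i, openXX n (U i)) -> openXX n (fun p => exists i, U i p).
Proof. by move=> oU p [i /oU [N hN]]; exists N => q xq yq; exists i; apply: hN. Qed.

Definition prefix_determined (S : XX n -> Prop) := exists N, forall p q : XX n,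
  agree N (sval p).1 (sval q).1 -> agree N (sval p).2 (sval q).2 -> S p <-> S q.

Lemma prefix_determined_clopen S : prefix_determined S -> clopen (openXX n) S.
Proof.
move=> [N hN]; split=> p Sp; exists N => q xq yq; first by apply/(hN p q xq yq).
by rewrite -(hN p q xq yq).
Qed.

Lemma co_agree {N} {x y : Pt n} {i k m} :
  agree N x y -> k < N -> m < N -> co x i k m = co y i k m.
Proof. by move=> xy hk hm; rewrite /co; case: insub => [j|] //; apply: xy. Qed.

Lemma prefix_determined_co_eq i k m i' k' m' :
  prefix_determined (fun p => co (sval p).1 i k m = co (sval p).2 i' k' m').
Proof.
exists (maxn (maxn k m) (maxn k' m')).+1 => p q xq yq.
by rewrite (co_agree xq) ?(co_agree yq) //; lia.
Qed.

Lemma same_code_Pi0 j k k' :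
  Pi0 (openXX n) j.+1 (fun p => same_code (sval p).1 (sval p).2 j k k').
Proof.
elim: j k k' => [|j IH] k k' /=; apply: (Pi0_bigcap openXX_bigcup) => // m.
  exact/clopen_Pi0/prefix_determined_clopen/prefix_determined_co_eq.
apply: (Pi0_bigcap openXX_bigcup) => // m'.
apply: (Pi0_imply openXX_bigcup) => //.
exact/clopen_Sigma0/prefix_determined_clopen/prefix_determined_co_eq.
Qed.

Lemma codes_match_Pi0 j :
  Pi0 (openXX n) j.+3 (fun p => codes_match (sval p).1 (sval p).2 j).
Proof.
apply: (Pi0_and openXX_bigcup) => //.
all: by apply: (Pi0_forall_exists openXX_bigcup) => // k k'; apply: same_code_Pi0.
Qed.

End ProductTopology.

Theorem proposition1p16 : forall n : nat, 1 <= n -> Pi0 (@openXX n) (2 + n) (@Frel n).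
Proof.
move=> n hn.
apply: (@Pi0_ext _ _ _ (fun p : XX n => forall j, j < n -> codes_match (sval p).1 (sval p).2 j)).
  by move=> [[x y] [hx hy]]; rewrite /Frel /= codes_match_iff_Aset_eq.
apply: (Pi0_bigcap (@openXX_bigcup n)) => // j.
have [hj|hj] := ltnP j n.
  apply: (@Pi0_ext _ _ _ (fun p : XX n => codes_match (sval p).1 (sval p).2 j)).
    by move=> p; split=> [h _ | /(_ isT)].
  by apply: (@Pi0_mono _ _ j.+3); [lia | exact: codes_match_Pi0].
apply/clopen_Pi0/prefix_determined_clopen => //.
by exists 0 => p q _ _; split=> _ [].
Qed.
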